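(* For every NCIFS $\Phi$ on $X\subset\mathbb R^d$, $\operatorname{HD}(J(\Phi))\le B(\Phi)$.
   Context: Fix $d\in\mathbb N$ and a compact set $X\subset\mathbb R^d$ equal to the closure of its interior, such that $\partial X$ is smooth or $X$ is convex. $\|D\phi\|:=\sup_{x\in X}|\phi'(x)|$ for a conformal map $\phi$. An NCIFS $\Phi$ on $X$ is a sequence $\Phi^{(j)}=(\phi^{(j)}_i:X\to X)_{i\in I^{(j)}}$, $j\ge1$, of families indexed by finite or countably infinite sets, satisfying: - (open set condition) images of $\operatorname{int}X$ under distinct maps of the same $\Phi^{(j)}$ are disjoint; - (conformality) there is an open connected $V\supset X$ such that all maps extend to $C^1$ conformal diffeomorphisms of $V$ into $V$; - (bounded distortion) there is $K\ge1$ with $|\phi'(x)|\le K|\phi'(y)|$ for $x,y\in V$ and every composition $\phi^{(k)}_{\omega_k}\circ\cdots\circ\phi^{(l)}_{\omega_l}$; - (uniform contraction) $\|D\phi^{(j)}_i\|\le\eta<1$ for all $i,j$. For $\omega\in I^n=\prod_{j\le n}I^{(j)}$ let $\phi_\omega=\phi^{(1)}_{\omega_1}\circ\cdots\circ\phi^{(n)}_{\omega_n}$. Define $J(\Phi)=\bigcap_n\bigcup_{\omega\in I^n}\phi_\omega(X)$, $Z_n(t)=\sum_{\omega\in I^n}\|D\phi_\omega\|^t$, $\underline P(t)=\liminf_n\frac1n\log Z_n(t)$ and $B(\Phi)=\sup\{t\ge0:\underline P(t)>0\}$ (with $\sup\emptyset=0$). $\operatorname{HD}$ is Hausdorff dimension.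 *)

From HB Require Import structures.
From mathcomp Require Import all_boot all_order all_algebra.
From mathcomp Require Import all_classical all_reals all_analysis.
Set Implicit Arguments. Unset Strict Implicit. Unset Printing Implicit Defensive.
Import Order.TTheory GRing.Theory Num.Theory.
Import numFieldNormedType.Exports.
Local Open Scope classical_set_scope.
Local Open Scope ring_scope.

Section NCIFS.
Variables (R : realType) (d : nat).
Local Notation V := 'rV[R]_d.

Definition enorm (v : V) : R := Num.sqrt (\sum_(i < d) v ord0 i ^+ 2).
Definition edist (x y : V) : R := enorm (x - y).

(* |f'(x)| : operator norm (w.r.t. the Euclidean norm) of the differential of f
   at x; for a conformal map this is its scaling factor. *)
Definition dnorm (f : V -> V) (x : V) : R :=
  sup [set enorm ('d f x v) | v in [set v : V | enorm v = 1]].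

Definition Dnorm (X : set V) (f : V -> V) : R := sup [set dnorm f x | x in X].

Definition conformal_at (f : V -> V) (x : V) : Prop :=
  exists2 c : R, 0 < c & forall v : V, enorm ('d f x v) = c * enorm v.

Definition C1_conformal_diffeo_into (U : set V) (f : V -> V) : Prop :=
  [/\ f @` U `<=` U,
      {in U &, injective f} &
    [/\
      (forall x, U x -> differentiable f x),
      (forall x v, U x -> ((fun y => 'd f y v) @ x --> ('d f x v))),
      (forall x, U x -> conformal_at f x) &
      (exists g : V -> V,
         (forall x, U x -> g (f x) = x) /\
         (forall y, (f @` U) y -> differentiable g y) /\
         (forall y w, (f @` U) y -> ((fun z => 'd g z w) @ y --> ('d g y w))))]].

Fixpoint iterD (vs : seq V) (g : V -> R) : V -> R :=
  match vs with [::] => g | v :: vs' => 'D_v (iterD vs' g) end.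

Definition smooth_on (U : set V) (g : V -> R) : Prop :=
  forall (vs : seq V) (x : V), U x ->
    (iterD vs g @ x --> iterD vs g x) /\ (forall v, derivable (iterD vs g) x v).

Definition boundary (X : set V) : set V := closure X `\` interior X.

Definition smooth_boundary (X : set V) : Prop :=
  forall p, boundary X p ->
    exists U : set V, [/\ open U, U p &
      exists g : V -> R, [/\ smooth_on U g,
        (forall x, U x -> exists v, 'D_v g x != 0) &
        (forall x, U x -> (X x <-> g x <= 0))]].

(* Index sets: I j (j >= 1) is the alphabet of the j-th family, encoded as a
   (finite or countably infinite) subset of nat; phi j i is the i-th map of the
   j-th family (given on all of R^d, i.e. it is already the extension to V). *)

Definition words (I : nat -> set nat) (m n : nat) : set (seq nat) :=
  [set w | size w = n /\ forall k, (k < n)%N -> I (m + k)%N (nth 0%N w k)].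

Fixpoint compw (phi : nat -> nat -> V -> V) (m : nat) (w : seq nat) : V -> V :=
  match w with [::] => id | a :: w' => phi m a \o compw phi m.+1 w' end.

Definition is_NCIFS (X : set V) (I : nat -> set nat)
    (phi : nat -> nat -> V -> V) : Prop :=
  [/\ (forall j i, (1 <= j)%N -> I j i -> phi j i @` X `<=` X),
      (forall j i i', (1 <= j)%N -> I j i -> I j i' -> i <> i' ->
         phi j i @` interior X `&` phi j i' @` interior X = set0),
      (exists U : set V, [/\ open U, connected U, X `<=` U &
        ((forall j i, (1 <= j)%N -> I j i -> C1_conformal_diffeo_into U (phi j i)) /\
         (exists2 K : R, 1 <= K & forall k l w x y, (1 <= k)%N ->
            words I k l w -> U x -> U y ->
            dnorm (compw phi k w) x <= K * dnorm (compw phi k w) y))]) &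
      (exists2 eta : R, eta < 1 & forall j i, (1 <= j)%N -> I j i ->
         Dnorm X (phi j i) <= eta)].

Definition limit_set (X : set V) (I : nat -> set nat) (phi : nat -> nat -> V -> V)
  : set V :=
  \bigcap_n \bigcup_(w in words I 1 n) (compw phi 1 w @` X).

Definition elog (z : \bar R) : \bar R :=
  match z with
  | EFin r => if (r <= 0)%R then -oo%E else (ln r)%:E
  | +oo%E => +oo%E
  | -oo%E => -oo%E
  end.

Definition Zn (X : set V) (I : nat -> set nat) (phi : nat -> nat -> V -> V)
    (n : nat) (t : R) : \bar R :=
  \esum_(w in words I 1 n) ((Dnorm X (compw phi 1 w)) `^ t)%:E.

Definition lower_pressure (X : set V) (I : nat -> set nat)
    (phi : nat -> nat -> V -> V) (t : R) : \bar R :=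
  limn_einf (fun n => ((n%:R)^-1)%:E * elog (Zn X I phi n t))%E.

Definition Bowen (X : set V) (I : nat -> set nat) (phi : nat -> nat -> V -> V)
  : \bar R :=
  let S := [set t%:E | t in [set t : R | 0 <= t /\ (0 < lower_pressure X I phi t)%E]] in
  if pselect (S = set0) then 0%E else ereal_sup S.

Definition ediam (U : set V) : R := sup [set edist x y | x in U & y in U].

Definition hweight (s : R) (U : set V) : R :=
  if pselect (U = set0) then 0 else ediam U `^ s.

Definition hausdorff_pre (s delta : R) (A : set V) : \bar R :=
  ereal_inf [set (\sum_(0 <= i <oo) (hweight s (U i))%:E)%E | U in
    [set U : nat -> set V | A `<=` \bigcup_i U i /\
       forall i x y, U i x -> U i y -> edist x y <= delta]].

Definition hausdorff_measure (s : R) (A : set V) : \bar R :=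
  ereal_sup [set hausdorff_pre s delta A | delta in [set delta : R | 0 < delta]].

Definition hausdorff_dim (A : set V) : \bar R :=
  ereal_inf [set s%:E | s in [set s : R | 0 <= s /\ hausdorff_measure s A = 0%E]].

End NCIFS.

From Pilot Require Import Defs.
From HB Require Import structures.
From mathcomp Require Import all_boot all_order all_algebra.
From mathcomp Require Import all_classical all_reals all_analysis.
From mathcomp Require Import ring lra.
Import Order.TTheory GRing.Theory Num.Theory.
Import numFieldNormedType.Exports.
Local Open Scope classical_set_scope.
Local Open Scope ring_scope.

Set Implicit Arguments. Unset Strict Implicit. Unset Printing Implicit Defensive.

(* Fix s < t with B(Phi) < s.  Since the lower pressure at s is not positive,
   Z_n(s) <= exp(n e) for infinitely many n, for any e > 0.  Cover X by finitely
   many balls inside the open set U on which the maps are conformal; by the mean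
   value inequality and bounded distortion, phi_w maps X inside each ball onto a
   set of diameter at most C ||D phi_w|| <= C eta^n.  For |w| = n these sets cover
   J(Phi), and the sum of their diameters to the power t is at most
   N C^t sum_w ||D phi_w||^s (eta^n)^(t - s) <= N C^t (eta^(t - s) exp e)^n,
   which tends to 0 once e is small.  Hence H^t(J(Phi)) = 0 for every t > B(Phi). *)

Section EuclideanNorm.
Variables (R : realType) (d : nat).
Implicit Types (v : 'rV[R]_d).

Lemma enorm_ge0 v : 0 <= enorm v.
Proof. exact: sqrtr_ge0. Qed.

Lemma enorm_dim0 v : d = 0%N -> enorm v = 0.
Proof. by rewrite /enorm => d0; move: v; rewrite d0 => v; rewrite big_ord0 sqrtr0. Qed.

Lemma coord_le_enorm v i : `|v ord0 i| <= enorm v.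
Proof.
rewrite -sqrtr_sqr /enorm ler_sqrt ?sumr_ge0 // => [|j _]; last exact: sqr_ge0.
by rewrite (bigD1 i) //= lerDl sumr_ge0 // => j _; rewrite sqr_ge0.
Qed.

Lemma enorm_le_mx_norm v : enorm v <= d%:R * `|v|.
Proof.
rewrite -ler_sqr ?nnegrE ?enorm_ge0 ?mulr_ge0 //.
rewrite /enorm sqr_sqrtr ?sumr_ge0 // => [|i _]; last exact: sqr_ge0.
apply: (@le_trans _ _ (\sum_(i < d) `|v| ^+ 2)).
  apply: ler_sum => i _; rewrite -real_normK ?num_real //.
  rewrite lerXn2r ?nnegrE ?normr_ge0 // [`|v|]mx_normrE.
  exact: (le_bigmax 0 (fun ij : 'I_1 * 'I_d => `|v ij.1 ij.2|) (ord0, i)).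
rewrite sumr_const card_ord exprMn -[_ *+ d]mulr_natl ler_wpM2r ?sqr_ge0 //.
by case: d => [|n]; rewrite ?expr2 ?mul0r // ler_peMl // ler1n.
Qed.

End EuclideanNorm.


Lemma sup_ge0 (R : realType) (E : set R) : (forall y, E y -> 0 <= y) -> 0 <= sup E.
Proof.
move=> E0; have [[y Ey]|nE] := pselect (E !=set0); last first.
  by rewrite (_ : E = set0) ?sup0 //; apply/seteqP; split => // z Ez; apply: nE; exists z.
have [hs|hs] := pselect (has_sup E); last by rewrite sup_out.
by apply: le_trans (E0 _ Ey) _; apply: ub_le_sup => //; case: hs.
Qed.

Section ConformalDifferential.
Variables (R : realType) (d : nat).
Local Notation V := 'rV[R]_d.
Implicit Types (f g : V -> V) (x : V).

Lemma dnorm_ge0 f x : 0 <= dnorm f x.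
Proof. by apply: sup_ge0 => _ [v _ <-]; exact: enorm_ge0. Qed.

Lemma Dnorm_ge0 (X : set V) f : 0 <= Dnorm X f.
Proof. by apply: sup_ge0 => _ [x _ <-]; exact: dnorm_ge0. Qed.

Lemma dnorm_dim0 f x : d = 0%N -> dnorm f x = 0.
Proof.
move=> d0; rewrite /dnorm (_ : [set _ | _ in _] = set0) ?sup0 //.
apply/seteqP; split => // _ [v /= + _]; rewrite enorm_dim0 //.
by move=> /esym /eqP; rewrite oner_eq0.
Qed.

Lemma dnorm_eq f x c : (0 < d)%N ->
  (forall v, enorm ('d f x v) = c * enorm v) -> dnorm f x = c.
Proof.
move=> d0 fc; rewrite /dnorm (_ : [set _ | _ in _] = [set c]) ?sup1 //.
have e1 : enorm (delta_mx 0 (Ordinal d0) : V) = 1.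
  rewrite /enorm (bigD1 (Ordinal d0)) //= big1 => [|i ni].
    by rewrite !mxE !eqxx expr1n addr0 sqrtr1.
  by rewrite !mxE eqxx /= (negbTE ni) expr0n.
apply/seteqP; split => [_ [v /= v1 <-]|_ ->]; first by rewrite fc v1 mulr1.
by exists (delta_mx 0 (Ordinal d0)) => //; rewrite fc e1 mulr1.
Qed.

Lemma conformal_atE f x : conformal_at f x ->
  forall v, enorm ('d f x v) = dnorm f x * enorm v.
Proof.
move=> [c _ fc] v; have [d0|d0] := posnP d; first by rewrite !enorm_dim0 ?mulr0.
by rewrite (dnorm_eq d0 fc) fc.
Qed.

Lemma dnorm_id x : dnorm id x <= 1.
Proof.
have [d0|d0] := posnP d; first by rewrite dnorm_dim0.
by rewrite (@dnorm_eq _ _ 1) // => v; rewrite diff_val mul1r.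
Qed.

Lemma conformal_at_id x : conformal_at id x.
Proof. by exists 1 => // v; rewrite diff_val mul1r. Qed.

Lemma conformal_at_comp f g x : differentiable g x -> differentiable f (g x) ->
  conformal_at g x -> conformal_at f (g x) ->
  conformal_at (f \o g) x /\ dnorm (f \o g) x = dnorm f (g x) * dnorm g x.
Proof.
move=> dg df [cg cg0 gc] [cf cf0 fc].
have dfg v : 'd (f \o g) x v = 'd f (g x) ('d g x v).
  exact: (congr1 (fun h => h v) (diff_comp dg df)).
split.
  by exists (cf * cg) => [|v]; [exact: mulr_gt0 | rewrite dfg fc gc mulrA].
have [d0|d0] := posnP d; first by rewrite !dnorm_dim0 ?mulr0.
by apply: (dnorm_eq d0) => v; rewrite dfg fc gc (dnorm_eq d0 fc) (dnorm_eq d0 gc) mulrA.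
Qed.

End ConformalDifferential.

Section MeanValue.
Variables (R : realType) (d : nat).
Local Notation V := 'rV[R]_d.

Lemma ball_segment (c a b : V) (r t : R) : 0 <= t <= 1 ->
  ball c r a -> ball c r b -> ball c r (t *: (b - a) + a).
Proof.
move=> /andP[t0 t1]; rewrite -!ball_normE /= => ca cb.
have -> : c - (t *: (b - a) + a) = (1 - t) *: (c - a) + t *: (c - b).
  by rewrite scalerBr !scalerBl scale1r; apply/rowP => i; rewrite !mxE; ring.
apply: le_lt_trans (ler_normD _ _) _; rewrite !normrZ !ger0_norm ?subr_ge0 //.
set m := Num.max `|c - a| `|c - b|.
have mr : m < r by rewrite gt_max ca cb.
have h1 : (1 - t) * `|c - a| <= (1 - t) * m.
  by apply: ler_wpM2l; [rewrite subr_ge0 | rewrite le_max lexx].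
have h2 : t * `|c - b| <= t * m by apply: ler_wpM2l => //; rewrite le_max lexx orbT.
lra.
Qed.

Lemma mx_norm_mvt (S : set V) (f : V -> V) (a b : V) (M : R) : 0 <= M ->
  (forall t, 0 <= t <= 1 -> S (t *: (b - a) + a)) ->
  (forall z, S z -> differentiable f z) ->
  (forall z v, S z -> enorm ('d f z v) <= M * enorm v) ->
  `|f b - f a| <= M * enorm (b - a).
Proof.
move=> M0 Sab Sdf SM; rewrite [`|_|]mx_normrE.
apply: bigmax_le => [|[i j] _ /=]; first by rewrite mulr_ge0 ?enorm_ge0.
rewrite ord1; pose g t : V := t *: (b - a) + a.
have dg (t : R) : differentiable g t /\ 'd g t 1 = b - a.
  have -> : g = ( *:%R ^~ (b - a)) + cst a by apply/funext.
  by split; [exact: ex_diff | rewrite diff_val /= addr0 scale1r].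
pose F (t : R) := f (g t) ord0 j; pose dF (t : R) := 'd f (g t) (b - a) ord0 j.
have F'dF (t : R) : 0 <= t <= 1 -> is_derive t 1 F (dF t).
  move=> t01; have [dgt dgt1] := dg t; have dfg := Sdf _ (Sab _ t01).
  have dfgt : derivable (f \o g) t 1.
    exact/diff_derivable/differentiable_comp.
  apply: DeriveDef; first by move/derivable_mxP : dfgt; apply.
  have := congr1 (fun m : V => m ord0 j) (derive_mx dfgt); rewrite mxE => <-.
  have dFgt1 : 'd (f \o g) t 1 = 'd f (g t) (b - a).
    by rewrite (diff_comp dgt dfg) /= dgt1.
  by rewrite deriveE ?dFgt1 //; exact: differentiable_comp.
have [c c01 Fc] : exists2 c, c \in `[0, 1]%R & F 1 - F 0 = dF c * (1 - 0).
  apply: MVT_segment => // [t|]; first by rewrite in_itv => /andP[? ?]; apply: F'dF; rewrite !ltW.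
  apply: derivable_within_continuous => t; rewrite in_itv => t01.
  by have [] := F'dF t t01.
move: Fc; rewrite subr0 mulr1 /F /g scale1r scale0r add0r subrK => Fc.
rewrite !mxE Fc; apply: le_trans (coord_le_enorm _ _) _.
by apply: SM; apply: Sab; move: c01; rewrite in_itv.
Qed.

End MeanValue.

Section RealBounds.
Variable R : realType.

Lemma powR_exprn (a r : R) n : 0 <= a -> (a ^+ n) `^ r = (a `^ r) ^+ n.
Proof. by move=> a0; rewrite -powR_mulrn // -powRrM mulrC powRrM powR_mulrn ?powR_ge0. Qed.

Lemma powR_le_split (D a s t : R) : 0 <= D <= a -> 0 <= s < t ->
  D `^ t <= D `^ s * a `^ (t - s).
Proof.
move=> /andP[D0 Da] /andP[s0 st].
have [->|Dn0] := eqVneq D 0.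
  by rewrite powR0 ?mulr_ge0 ?powR_ge0 // gt_eqF //; apply: le_lt_trans st.
have -> : D `^ t = D `^ s * D `^ (t - s) by rewrite -powRD ?Dn0 ?implybT // addrC subrK.
rewrite ler_wpM2l ?powR_ge0 //.
by rewrite ge0_ler_powR ?nnegrE ?subr_ge0 ?(le_trans D0 Da) // ltW.
Qed.

Lemma powR_lt1 (x r : R) : 0 <= x < 1 -> 0 < r -> x `^ r < 1.
Proof.
move=> /andP[x0 x1] r0.
by have := gt0_ltr_powR r0 (x := x) (y := 1); rewrite powR1 !nnegrE ler01 x0 => ->.
Qed.

Lemma near_geometric_lt (c r e : R) : 0 <= r < 1 -> 0 < e ->
  \forall n \near \oo, c * r ^+ n < e.
Proof.
move=> /andP[r0 r1] e0; apply: (@cvgr_lt _ _ _ _ _ 0) => //.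
rewrite -(mulr0 c); apply: cvgZl_tmp; apply: cvg_expr.
by rewrite ger0_norm.
Qed.

Lemma exists_mul_expR_lt1 (q : R) : 0 < q < 1 -> exists2 e, 0 < e & q * expR e < 1.
Proof.
move=> /andP[q0 q1]; have lnq : ln q < 0 by rewrite ln_lt0 // q0.
exists (- ln q / 2); first lra.
by rewrite -{1}(lnK q0) -expRD expR_lt1; lra.
Qed.

Lemma limn_einf_lt_frequently (u : nat -> \bar R) (x : R) :
  (limn_einf u < x%:E)%E -> forall N, exists2 n, (N <= n)%N & (u n < x%:E)%E.
Proof.
move=> ux N; apply: contrapT => uNx.
have xu n : (N <= n)%N -> (x%:E <= u n)%E.
  by move=> Nn; rewrite leNgt; apply/negP => unx; apply: uNx; exists n.
suff : (x%:E <= limn_einf u)%E by rewrite leNgt ux.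
rewrite limn_einf_lim; apply: lime_ge; first exact: is_cvg_einfs.
exists N => // m /= Nm; apply: le_ereal_inf_tmp => _ [k /= mk <-].
by apply: xu; apply: leq_trans mk.
Qed.

End RealBounds.

Section BlockSeries.
Variable R : realType.
Implicit Types (a b : nat -> \bar R).

Lemma lee_natmul (x y : \bar R) n : (x <= y)%E -> ((x *+ n)%R <= (y *+ n)%R)%E.
Proof. by move=> xy; elim: n => [|n IH]; rewrite ?mulr0n // !mulrS leeD. Qed.

Lemma sum_block a N L :
  \sum_(0 <= i < N * L) a (i %/ N)%N = (\sum_(0 <= j < L) a j) *+ N.
Proof.
elim: L => [|L IH]; first by rewrite muln0 !big_geq // mul0rn.
rewrite mulnS addnC (big_cat_nat _ (leq_addr _ _)) //= IH big_nat_recr //=.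
rewrite mulrnDl; congr (_ + _)%E.
rewrite -{1}(add0n (N * L)%N) big_addn addnC addnK.
rewrite (@eq_big_nat _ _ _ 0 N _ (fun=> a L)); first by rewrite sumr_const_nat subn0.
move=> i /andP[_ iN]; have N0 : (0 < N)%N by apply: leq_ltn_trans iN.
by rewrite addnC mulnC divnMDl // divn_small // addn0.
Qed.

Lemma nneseries_block_le b a N : (0 < N)%N ->
  (forall i, 0 <= b i)%E -> (forall j, 0 <= a j)%E ->
  (forall i, b i <= a (i %/ N)%N)%E ->
  (\sum_(0 <= i <oo) b i <= ((\sum_(0 <= j <oo) a j) *+ N)%R)%E.
Proof.
move=> N0 b0 a0 ba; apply: lime_le; first exact: is_cvg_nneseries.
exists 0%N => // L _ /=.
have LNL : (L <= N * L)%N by rewrite leq_pmull.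
apply: (@le_trans _ _ (\sum_(0 <= i < N * L) b i)%E).
  rewrite (@big_cat_nat _ _ _ L 0 (N * L)%N _ _ (leq0n L) LNL) /= leeDl //.
  by apply: sume_ge0 => i _.
apply: (@le_trans _ _ (\sum_(0 <= i < N * L) a (i %/ N)%N)%E).
  by apply: lee_sum => i _.
by rewrite sum_block; apply: lee_natmul; apply: nneseries_lim_ge => n _ _.
Qed.

End BlockSeries.

Section HausdorffDimension.
Variables (R : realType) (d : nat).
Local Notation V := 'rV[R]_d.

Lemma hweight_ge0 (t : R) (A : set V) : 0 <= hweight t A.
Proof. by rewrite /hweight; case: pselect => // ?; exact: powR_ge0. Qed.

Lemma hweight_le (t D : R) (A : set V) : 0 <= t -> 0 <= D ->
  (forall x y, A x -> A y -> Defs.edist x y <= D) -> hweight t A <= D `^ t.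
Proof.
move=> t0 D0 AD; rewrite /hweight; case: pselect => [?|An0]; first exact: powR_ge0.
have [x Ax] : A !=set0 by apply/set0P/eqP.
apply: ge0_ler_powR => //; rewrite ?nnegrE //.
  by apply: sup_ge0 => _ [y _ [z _ <-]]; exact: enorm_ge0.
by apply: ge_sup; [exists (Defs.edist x x), x => //; exists x | move=> _ [y Ay [z Az <-]]; exact: AD].
Qed.

Lemma hausdorff_measure_eq0 (t : R) (A : set V) :
  (forall delta eps, 0 < delta -> 0 < eps -> exists U : nat -> set V,
     [/\ A `<=` \bigcup_i U i,
         (forall i x y, U i x -> U i y -> Defs.edist x y <= delta) &
         (\sum_(0 <= i <oo) (hweight t (U i))%:E <= eps%:E)%E]) ->
  hausdorff_measure t A = 0%E.
Proof.
move=> Acov.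
have pre0 delta : 0 < delta -> hausdorff_pre t delta A = 0%E.
  move=> delta0; apply/eqP; rewrite eq_le; apply/andP; split.
    apply/lee_addgt0Pr => e e0; rewrite add0e.
    have [U [AU Udelta Ue]] := Acov delta e delta0 e0.
    by apply: le_trans Ue; apply: ereal_inf_lbound; exists U.
  apply: le_ereal_inf_tmp => _ [U _ <-].
  by apply: nneseries_ge0 => n _ _; rewrite lee_fin hweight_ge0.
rewrite /hausdorff_measure (_ : [set _ | _ in _] = [set 0%E]) ?ereal_sup1 //.
apply/seteqP; split => [_ [delta /= delta0 <-]|_ ->]; first by rewrite pre0.
by exists 1; [exact: ltr01 | exact: pre0 ltr01].
Qed.

Lemma hausdorff_dim_le (A : set V) (B : \bar R) : (0 <= B)%E ->
  (forall s t : R, 0 <= s -> (B < s%:E)%E -> s < t -> hausdorff_measure t A = 0%E) ->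
  (hausdorff_dim A <= B)%E.
Proof.
case: B => [b|_ _|//]; last by rewrite leey.
rewrite lee_fin => b0 Ab; apply/lee_addgt0Pr => e e0; rewrite -EFinD.
apply: ereal_inf_lbound; exists (b + e) => //; split; first by rewrite addr_ge0 // ltW.
by apply: (Ab (b + e / 2)); rewrite ?lte_fin; lra.
Qed.

End HausdorffDimension.

Lemma compact_edist_bounded (R : realType) (d : nat) (X : set 'rV[R]_d) : compact X ->
  exists2 D : R, 0 <= D & forall x y, X x -> X y -> Defs.edist x y <= D.
Proof.
move=> /compact_bounded/pinfty_ex_gt0[M M0 XM].
exists (d%:R * (M + M)) => [|x y Xx Xy]; first by rewrite mulr_ge0 // addr_ge0 // ltW.
apply: le_trans (enorm_le_mx_norm _) _; rewrite ler_wpM2l //.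
by apply: le_trans (ler_normB _ _) _; rewrite lerD ?XM.
Qed.

Lemma compact_ball_cover (R : realType) (d : nat) (X U : set 'rV[R]_d) :
  compact X -> open U -> X `<=` U ->
  exists N (ctr : nat -> 'rV[R]_d) (rad : nat -> R),
    (forall k, (k < N)%N -> ball (ctr k) (rad k) `<=` U) /\
    (forall x, X x -> exists2 k, (k < N)%N & ball (ctr k) (rad k) x).
Proof.
move=> cX oU XU.
have /choice[rad radU] : forall x, exists r : R, X x -> 0 < r /\ ball x r `<=` U.
  move=> x; have [Xx|nXx] := pselect (X x); last by exists 1.
  by have /nbhs_ballP[r r0 rU] := oU x (XU _ Xx); exists r.
move: cX; rewrite compact_cover => /(_ _ X (fun x => ball x (rad x))) [].
- by move=> x _; exact: ball_open.
- by move=> x Xx; exists x => //; apply: ballxx; have [] := radU x Xx.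
move=> F FX XF; pose cs := finmap.enum_fset F; pose ctr k := nth 0 cs k.
exists (size cs), ctr, (rad \o ctr); split => [k kF|x /XF[c /= Fc cx]].
  have : X (ctr k) by have := FX (ctr k); rewrite in_setE; apply; exact: mem_nth.
  by move=> /radU[].
by exists (index c cs); rewrite ?index_mem // /ctr nth_index.
Qed.

Section WordMaps.
Variables (R : realType) (d : nat).
Local Notation V := 'rV[R]_d.
Variables (X U : set V) (I : nat -> set nat) (phi : nat -> nat -> V -> V).

Lemma words_cons m n a w : words I m n (a :: w) ->
  exists n', [/\ n = n'.+1, I m a & words I m.+1 n' w].
Proof.
case=> /= <- Iw; exists (size w); split => //; first by have := Iw 0%N; rewrite addn0; apply.
by split => // k kw; rewrite addSnnS; apply: Iw.
Qed.

Hypothesis phiX : forall j i, (1 <= j)%N -> I j i -> phi j i @` X `<=` X.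
Hypothesis phiU : forall j i, (1 <= j)%N -> I j i -> C1_conformal_diffeo_into U (phi j i).

Lemma compw_X m n w x : (1 <= m)%N -> words I m n w -> X x -> X (compw phi m w x).
Proof.
elim: w m n => [|a w IH] m n m1 mw Xx //=.
have [n' [_ Ia mw']] := words_cons mw.
by apply: (phiX m1 Ia); exists (compw phi m.+1 w x) => //; exact: IH mw' Xx.
Qed.

Lemma compw_conformal m n w x : (1 <= m)%N -> words I m n w -> U x ->
  [/\ U (compw phi m w x), differentiable (compw phi m w) x &
      conformal_at (compw phi m w) x].
Proof.
elim: w m n => [|a w IH] m n m1 mw Ux /=.
  by split; [| exact: ex_diff | exact: conformal_at_id].
have [n' [_ Ia mw']] := words_cons mw.
have [Uw dw cw] := IH m.+1 n' (leqW m1) mw' Ux.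
have [aU _ [da _ ca _]] := phiU m1 Ia.
have [cfw _] := conformal_at_comp dw (da _ Uw) cw (ca _ Uw).
split => //; first by apply: aU; exists (compw phi m.+1 w x).
exact: differentiable_comp dw (da _ Uw).
Qed.

Hypothesis XU : X `<=` U.
Variable K : R.
Hypothesis distortion : forall k l w x y, (1 <= k)%N -> words I k l w -> U x -> U y ->
  dnorm (compw phi k w) x <= K * dnorm (compw phi k w) y.

Lemma dnorm_le_Dnorm m n w x : (1 <= m)%N -> words I m n w -> X x ->
  dnorm (compw phi m w) x <= Dnorm X (compw phi m w).
Proof.
move=> m1 mw Xx; apply: ub_le_sup; last by exists x.
by exists (K * dnorm (compw phi m w) x) => _ [y Xy <-]; exact: distortion m1 mw (XU Xy) (XU Xx).
Qed.

Lemma Dnorm_le (f : V -> V) (M : R) : 0 <= M ->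
  (forall x, X x -> dnorm f x <= M) -> Dnorm X f <= M.
Proof.
move=> M0 fM; have [[x Xx]|nX] := pselect (X !=set0).
  by apply: ge_sup; [exists (dnorm f x), x | move=> _ [y Xy <-]; exact: fM].
rewrite /Dnorm (_ : [set _ | _ in _] = set0) ?sup0 //.
by apply/seteqP; split => // z [y Xy _]; apply: nX; exists y.
Qed.

Variable eta : R.
Hypothesis eta_ge0 : 0 <= eta.
Hypothesis contraction : forall j i, (1 <= j)%N -> I j i -> Dnorm X (phi j i) <= eta.

Lemma Dnorm_compw m n w : (1 <= m)%N -> words I m n w ->
  Dnorm X (compw phi m w) <= eta ^+ n.
Proof.
elim: w m n => [|a w IH] m n m1 mw.
  by case: mw => /= <- _; apply: Dnorm_le => // x _; exact: dnorm_id.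
have [n' [-> Ia mw']] := words_cons mw.
have ma : words I m 1 [:: a] by split => // -[|k] //; rewrite addn0.
apply: Dnorm_le => [|x Xx /=]; first by rewrite exprn_ge0.
have [Uw dw cw] := compw_conformal (leqW m1) mw' (XU Xx).
have [_ _ [da _ ca _]] := phiU m1 Ia.
have [_ ->] := conformal_at_comp dw (da _ Uw) cw (ca _ Uw).
rewrite exprS ler_pM ?dnorm_ge0 //.
  apply: le_trans (contraction m1 Ia).
  exact: (dnorm_le_Dnorm m1 ma (compw_X (leqW m1) mw' Xx)).
exact: le_trans (dnorm_le_Dnorm (leqW m1) mw' Xx) (IH _ _ (leqW m1) mw').
Qed.

End WordMaps.

Section BowenParameter.
Variables (R : realType) (d : nat).
Local Notation V := 'rV[R]_d.
Variables (X : set V) (I : nat -> set nat) (phi : nat -> nat -> V -> V).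

Local Notation pressure_set :=
  [set t%:E | t in [set t : R | 0 <= t /\ (0 < lower_pressure X I phi t)%E]].

Lemma Bowen_ge0 : (0 <= Bowen X I phi)%E.
Proof.
rewrite /Bowen; case: pselect => // S0.
have /set0P[x Sx] : pressure_set != set0 by apply/eqP.
apply: le_trans (ereal_sup_ubound Sx).
by case: Sx => t [t0 _] <-; rewrite lee_fin.
Qed.

Lemma lower_pressure_le0 (s : R) : 0 <= s -> (Bowen X I phi < s%:E)%E ->
  (lower_pressure X I phi s <= 0)%E.
Proof.
move=> s0 Bs; rewrite leNgt; apply/negP => Ps.
have Ss : pressure_set s%:E by exists s.
move: Bs; rewrite /Bowen; case: pselect => [S0 _|?]; first by move: Ss; rewrite S0.
by rewrite ltNge (ereal_sup_ubound Ss).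
Qed.

Lemma Zn_ge0 n (s : R) : (0 <= Zn X I phi n s)%E.
Proof. by apply: esum_ge0 => w _; rewrite lee_fin powR_ge0. Qed.

Lemma Zn_le_expR n (s e : R) : (0 < n)%N ->
  ((n%:R^-1)%:E * elog (Zn X I phi n s) < e%:E)%E ->
  (Zn X I phi n s <= (expR (n%:R * e))%:E)%E.
Proof.
move=> n0; have n0' : 0 < n%:R :> R by rewrite ltr0n.
move: (Zn_ge0 n s); case: (Zn X I phi n s) => [z| |] //=; last first.
  by rewrite gt0_muley ?lte_fin ?invr_gt0 // ltNge leey.
rewrite lee_fin; case: ifPn => [z0 _ _|]; first by rewrite lee_fin (le_trans z0) ?expR_ge0.
rewrite -ltNge -EFinM lte_fin => z0 _ ze.
rewrite lee_fin -ler_ln ?posrE ?expR_gt0 // expRK.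
have -> : ln z = n%:R * (n%:R^-1 * ln z) by rewrite mulrA mulfV ?gt_eqF // mul1r.
by rewrite ler_pM2l // ltW.
Qed.

(* The terms of [Zn X I phi n s], indexed by the code [pickle w] of the word [w]
   so that they can be matched with nat-indexed covers. *)
Definition word_weight (n : nat) (s : R) (j : nat) : R :=
  if pickle_inv j is Some w then
    if `[< words I 1 n w >] then Dnorm X (compw phi 1 w) `^ s else 0
  else 0.

Lemma word_weight_ge0 n s j : 0 <= word_weight n s j.
Proof. by rewrite /word_weight; case: pickle_inv => // w; case: ifP => // _; exact: powR_ge0. Qed.

Lemma Zn_series n (s : R) :
  (\sum_(0 <= j <oo) (word_weight n s j)%:E)%E = Zn X I phi n s.
Proof.
rewrite nneseries_esumT => [|j]; last by rewrite lee_fin word_weight_ge0.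
transitivity (\esum_(j in pickle @` words I 1 n) (word_weight n s j)%:E)%E.
  rewrite [RHS]esum_mkcond; apply: eq_esum => j _; case: ifPn => // jw.
  rewrite /word_weight; case jw' : pickle_inv => [w|//]; case: asboolP => // nw.
  have pwj : pickle w = j by have := @pickle_invK (seq nat) j; rewrite jw'.
  by case/negP: jw; rewrite inE; exists w.
have bij := inj_bij (A := words I 1 n) (in2W (pcan_inj (@pickleK_inv (seq nat)))).
rewrite (@reindex_esum _ _ _ _ _ _ _ bij).
by apply: eq_esum => w nw; rewrite /word_weight pickleK_inv asboolT.
Qed.

End BowenParameter.

Section LimitSetCover.
Variables (R : realType) (d : nat).
Local Notation V := 'rV[R]_d.
Variables (X U : set V) (I : nat -> set nat) (phi : nat -> nat -> V -> V).
Hypothesis phiX : forall j i, (1 <= j)%N -> I j i -> phi j i @` X `<=` X.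
Hypothesis phiU : forall j i, (1 <= j)%N -> I j i -> C1_conformal_diffeo_into U (phi j i).
Hypothesis XU : X `<=` U.
Variable K : R.
Hypothesis K_ge0 : 0 <= K.
Hypothesis distortion : forall k l w x y, (1 <= k)%N -> words I k l w -> U x -> U y ->
  dnorm (compw phi k w) x <= K * dnorm (compw phi k w) y.
Variable diamX : R.
Hypothesis diamX_ge0 : 0 <= diamX.
Hypothesis X_edist : forall x y, X x -> X y -> Defs.edist x y <= diamX.

Let C := d%:R * K * diamX.

Lemma edist_compw_ball m n w (c x y : V) (r : R) :
  (1 <= m)%N -> words I m n w -> ball c r `<=` U ->
  X x -> X y -> ball c r x -> ball c r y ->
  Defs.edist (compw phi m w x) (compw phi m w y) <= C * Dnorm X (compw phi m w).
Proof.
move=> m1 mw cU Xx Xy cx cy; set f := compw phi m w.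
have M0 : 0 <= K * Dnorm X f by rewrite mulr_ge0 ?Dnorm_ge0.
have fxy : `|f x - f y| <= K * Dnorm X f * enorm (x - y).
  apply: (mx_norm_mvt (S := ball c r)) => // [t t01|z cz|z v cz].
  - exact: ball_segment.
  - by have [] := compw_conformal phiU m1 mw (cU _ cz).
  have [_ _ cfz] := compw_conformal phiU m1 mw (cU _ cz).
  rewrite (conformal_atE cfz) ler_wpM2r ?enorm_ge0 //.
  apply: le_trans (distortion m1 mw (cU _ cz) (XU Xx)) _.
  by rewrite ler_wpM2l // (dnorm_le_Dnorm XU distortion m1 mw Xx).
apply: le_trans (enorm_le_mx_norm _) _.
have -> : C * Dnorm X f = d%:R * (K * Dnorm X f * diamX) by rewrite /C; ring.
rewrite ler_wpM2l //; apply: le_trans fxy _.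
by rewrite ler_wpM2l //; exact: X_edist.
Qed.

Variable eta : R.
Hypothesis eta_gt0 : 0 < eta.
Hypothesis eta_lt1 : eta < 1.
Hypothesis contraction : forall j i, (1 <= j)%N -> I j i -> Dnorm X (phi j i) <= eta.

Let Dnorm_word n w : words I 1 n w -> Dnorm X (compw phi 1 w) <= eta ^+ n.
Proof. by move=> nw; apply: (Dnorm_compw phiX phiU XU distortion (ltW eta_gt0) contraction _ nw). Qed.

Variables (N : nat) (ctr : nat -> V) (rad : nat -> R).
Hypothesis ball_U : forall k, (k < N)%N -> ball (ctr k) (rad k) `<=` U.
Hypothesis X_balls : forall x, X x -> exists2 k, (k < N)%N & ball (ctr k) (rad k) x.

(* For [i = pickle w * N + k] with [|w| = n] and [k < N], [cover n i] is the image
   under [phi_w] of the part of [X] in the [k]-th ball; all other sets are empty. *)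
Definition cover (n i : nat) : set V :=
  if pickle_inv (i %/ N)%N is Some w then
    if `[< words I 1 n w >] && (i %% N < N)%N
    then compw phi 1 w @` (X `&` ball (ctr (i %% N)%N) (rad (i %% N)%N))
    else set0
  else set0.

Lemma limit_set_sub_cover n : limit_set X I phi `<=` \bigcup_i cover n i.
Proof.
move=> z /(_ n Logic.I) [w nw [x Xx <-]]; have [k kN xk] := X_balls Xx.
have N0 : (0 < N)%N by apply: leq_ltn_trans kN.
have iN : ((pickle w * N + k) %/ N = pickle w)%N by rewrite divnMDl // divn_small ?addn0.
have iNk : ((pickle w * N + k) %% N = k)%N by rewrite modnMDl modn_small.
exists (pickle w * N + k)%N => //; rewrite /cover iN pickleK_inv iNk kN (asboolT nw).
by exists x.
Qed.

Lemma cover_edist n i x y : cover n i x -> cover n i y ->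
  exists2 w, pickle_inv (i %/ N)%N = Some w /\ words I 1 n w &
    Defs.edist x y <= C * Dnorm X (compw phi 1 w).
Proof.
rewrite /cover; case: pickle_inv => [w|//]; case: ifP => [/andP[/asboolP nw kN]|//].
move=> [x' [Xx' kx'] <-] [y' [Xy' ky'] <-]; exists w => //.
exact: edist_compw_ball nw (ball_U kN) Xx' Xy' kx' ky'.
Qed.

Lemma hweight_cover n i (s t : R) : 0 <= s < t ->
  hweight t (cover n i) <= C `^ t * (eta `^ (t - s)) ^+ n * word_weight X I phi n s (i %/ N)%N.
Proof.
move=> st; have C0 : 0 <= C by rewrite /C !mulr_ge0.
have rhs0 : 0 <= C `^ t * (eta `^ (t - s)) ^+ n * word_weight X I phi n s (i %/ N)%N.
  by rewrite !mulr_ge0 ?exprn_ge0 ?powR_ge0 ?word_weight_ge0.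
have [i0|/eqP/set0P[z iz]] := pselect (cover n i = set0).
  by rewrite /hweight; case: pselect => // /(_ i0).
have [w [iw nw] _] := cover_edist iz iz; set D := Dnorm X (compw phi 1 w).
have -> : word_weight X I phi n s (i %/ N)%N = D `^ s by rewrite /word_weight iw asboolT.
have hw : hweight t (cover n i) <= (C * D) `^ t.
  apply: hweight_le => [||x y ix iy]; first by case/andP: st => s0 st; rewrite (le_trans s0) ?ltW.
    by rewrite mulr_ge0 ?Dnorm_ge0.
  have [w' [iw' _] dxy] := cover_edist ix iy.
  by move: iw' dxy; rewrite iw => -[<-].
apply: le_trans hw _.
rewrite powRM ?Dnorm_ge0 // -mulrA; apply: ler_wpM2l; first exact: powR_ge0.
rewrite -powR_exprn 1?[X in _ <= X]mulrC; last exact: ltW.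
by apply: powR_le_split => //; rewrite Dnorm_ge0 Dnorm_word.
Qed.

Lemma cover_weight_sum n (s t z : R) : 0 <= s < t -> (Zn X I phi n s <= z%:E)%E ->
  (\sum_(0 <= i <oo) (hweight t (cover n i))%:E <=
     (N%:R * C `^ t * (eta `^ (t - s)) ^+ n * z)%:E)%E.
Proof.
move=> st Zz; set c := C `^ t * (eta `^ (t - s)) ^+ n.
have c0 : 0 <= c by rewrite mulr_ge0 ?powR_ge0 ?exprn_ge0 // powR_ge0.
have [N0|N0] := posnP N.
  rewrite eseries0 ?N0 ?mul0r // => i _ _.
  have -> : cover n i = set0 by rewrite /cover; case: pickle_inv => // w; rewrite ltn_mod N0 andbF.
  by rewrite /hweight; case: pselect.
apply: le_trans (nneseries_block_le
  (a := fun j => (c%:E * (word_weight X I phi n s j)%:E)%E) N0 _ _ _) _.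
- by move=> i; rewrite lee_fin hweight_ge0.
- by move=> j; rewrite mule_ge0 ?lee_fin ?word_weight_ge0.
- by move=> i; rewrite -EFinM lee_fin hweight_cover.
rewrite nneseriesZl => [|j _]; last by rewrite lee_fin word_weight_ge0.
have -> : N%:R * C `^ t * (eta `^ (t - s)) ^+ n * z = (c * z) *+ N.
  by rewrite -mulr_natl /c; ring.
rewrite Zn_series EFin_natmul.
by apply: lee_natmul; rewrite (EFinM c z); apply: lee_wpmul2l; rewrite ?lee_fin.
Qed.

Lemma limit_set_hausdorff_eq0 (s t : R) : 0 <= s < t ->
  (lower_pressure X I phi s <= 0)%E -> hausdorff_measure t (limit_set X I phi) = 0%E.
Proof.
move=> st Ps; apply: hausdorff_measure_eq0 => delta eps delta0 eps0.
set q := eta `^ (t - s).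
have q01 : 0 < q < 1.
  by rewrite powR_gt0 //= powR_lt1 ?ltW ?eta_lt1 // subr_gt0; case/andP: st.
have [e e0 qe1] := exists_mul_expR_lt1 q01.
have qe01 : 0 <= q * expR e < 1 by rewrite qe1 mulr_ge0 ?expR_ge0 ?ltW //; case/andP: q01.
have eta01 : 0 <= eta < 1 by rewrite eta_lt1 ltW.
have [N1 _ small_weight] := near_geometric_lt (N%:R * C `^ t) qe01 eps0.
have [N2 _ small_diam] := near_geometric_lt C eta01 delta0.
have Pe : (limn_einf (fun n => ((n%:R)^-1)%:E * elog (Zn X I phi n s)) < e%:E)%E.
  by apply: le_lt_trans Ps _; rewrite lte_fin.
have [n Nn Pn] := limn_einf_lt_frequently Pe (maxn (maxn N1 N2) 1).
have n0 : (0 < n)%N by apply: leq_trans Nn; rewrite leq_max orbT.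
exists (cover n); split; first exact: limit_set_sub_cover.
  move=> i x y ix iy; have [w [_ nw] dxy] := cover_edist ix iy.
  apply: le_trans dxy _; apply: ltW; apply: le_lt_trans (small_diam n _).
    by rewrite ler_wpM2l ?Dnorm_word // /C !mulr_ge0.
  by apply: leq_trans Nn; rewrite !leq_max leqnn orbT.
apply: le_trans (cover_weight_sum st (Zn_le_expR n0 Pn)) _; rewrite lee_fin.
rewrite expRM_natl -mulrA -exprMn ltW // small_weight //.
by apply: leq_trans Nn; rewrite !leq_max leqnn.
Qed.

End LimitSetCover.

Unset Implicit Arguments.

Theorem lemma2p8 (R : realType) (d : nat) (X : set 'rV[R]_d)
    (I : nat -> set nat) (phi : nat -> nat -> 'rV[R]_d -> 'rV[R]_d) :
  compact X ->
  closure (interior X) = X ->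
  smooth_boundary X \/ convex_set X ->
  is_NCIFS X I phi ->
  (hausdorff_dim (limit_set X I phi) <= Bowen X I phi)%E.
Proof.
move=> cX _ _ [phiX _ [U [oU _ XU [phiU [K K1 distortion]]]] [eta eta1 contraction]].
have K0 : 0 <= K by apply: le_trans K1.
pose eta' := Num.max eta 2^-1.
have eta'0 : 0 < eta' by rewrite lt_max invr_gt0 ltr0n orbT.
have eta'1 : eta' < 1 by rewrite gt_max eta1 invf_lt1 ?ltr1n.
have contraction' j i : (1 <= j)%N -> I j i -> Dnorm X (phi j i) <= eta'.
  by move=> j1 Iji; rewrite le_max contraction.
have [diamX diamX0 X_edist] := compact_edist_bounded cX.
have [N [ctr [rad [ball_U X_balls]]]] := compact_ball_cover cX oU XU.
apply: hausdorff_dim_le (Bowen_ge0 X I phi) _ => s t s0 Bs st.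
have s_t : 0 <= s < t by rewrite s0.
exact: (limit_set_hausdorff_eq0 phiX phiU XU K0 distortion diamX0 X_edist
  eta'0 eta'1 contraction' ball_U X_balls s_t (lower_pressure_le0 s0 Bs)).
Qed.
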